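(* Let $p$ be a prime and $(\Gamma,\theta)$ an oriented profinite group. Suppose that for every open subgroup $U\le\Gamma$ and every natural number $n$ the natural map $H^1(U,\mathbb{Z}_p(1)/p^n)\to H^1(U,\mathbb{Z}_p(1)/p)$ is surjective. Then the same surjectivity holds for every closed subgroup $H\le\Gamma$ and every $n$, i.e. $(\Gamma,\theta)$ is cyclotomic.
   Context: An orientation is a continuous homomorphism $\theta:\Gamma\to\mathbb{Z}_p^\times$ with image in $1+p\mathbb{Z}_p$; $\mathbb{Z}_p(1)$ is $\mathbb{Z}_p$ with action $g.x=\theta(g)x$ and $\mathbb{Z}_p(1)/p^m=\mathbb{Z}_p(1)/p^m\mathbb{Z}_p(1)$. Cohomology is continuous. $(\Gamma,\theta)$ is cyclotomic if for every closed subgroup $H$ and every $m$ the map $H^1(H,\mathbb{Z}_p(1)/p^m)\to H^1(H,\mathbb{Z}_p(1)/p)$ is surjective. *)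

From HB Require Import structures.
From mathcomp Require Import all_boot all_order all_algebra.
From mathcomp Require Import all_classical all_reals all_analysis.
Set Implicit Arguments. Unset Strict Implicit. Unset Printing Implicit Defensive.
Import Order.TTheory GRing.Theory Num.Theory.
Local Open Scope classical_set_scope.

Definition is_profinite_group (G : topologicalType)
  (mul : G -> G -> G) (inv : G -> G) (one : G) : Prop :=
  [/\ (forall x y z, mul x (mul y z) = mul (mul x y) z),
      (forall x, mul one x = x /\ mul x one = x),
      (forall x, mul (inv x) x = one /\ mul x (inv x) = one),
      (continuous (fun xy : G * G => mul xy.1 xy.2) /\ continuous inv) &
      [/\ compact [set: G], hausdorff_space G &
       totally_disconnected [set: G]]].

Definition is_subgroup (G : Type) (mul : G -> G -> G) (inv : G -> G) (one : G)
  (H : set G) : Prop :=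
  [/\ H one, (forall x y, H x -> H y -> H (mul x y)) & (forall x, H x -> H (inv x))].

Definition closed_subgroup (G : topologicalType) mul inv (one : G) (H : set G) :=
  is_subgroup mul inv one H /\ closed H.

Definition open_subgroup (G : topologicalType) mul inv (one : G) (H : set G) :=
  is_subgroup mul inv one H /\ open H.

(* p-adic integers Z_p = lim Z/p^n, an element being represented by its
   sequence of canonical residues x n in [0, p^n) with x (n+1) = x n mod p^n. *)
Definition is_padic (p : nat) (x : nat -> int) : Prop :=
  (forall n, 0 <= x n < (p ^ n)%:Z)%R /\
  (forall n, (x n.+1 = x n %[mod (p ^ n)%:Z])%Z).

(* An orientation theta : Gamma -> Z_p^x, continuous homomorphism with image in
   1 + pZ_p.  theta g n is the residue of theta(g) modulo p^n.
   Continuity for the p-adic (= inverse limit) topology: each residue map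
   g |-> theta g n is locally constant. *)
Definition is_orientation (p : nat) (G : topologicalType) (mul : G -> G -> G)
  (theta : G -> nat -> int) : Prop :=
  [/\ (forall g, is_padic p (theta g)),
      (forall g h n, (theta (mul g h) n = theta g n * theta h n %[mod (p ^ n)%:Z])%Z),
      (forall g, theta g 1 = 1%R) &
      (forall n (g : G), exists V : set G, [/\ open V, V g &
          forall h, V h -> theta h n = theta g n])].

(* Continuous 1-cocycles of the closed subgroup H with values in
   Z_p(1)/p^m = Z/p^m (action h.x = theta(h) x), represented by integer-valued
   maps (values read modulo p^m).  Continuity for the discrete target and the
   subspace topology on H means local constancy on H. *)
Definition cont_cocycle (p m : nat) (G : topologicalType) (mul : G -> G -> G)
  (theta : G -> nat -> int) (H : set G) (c : G -> int) : Prop :=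
  (forall g h, H g -> H h ->
     (c (mul g h) = c g + theta g m * c h %[mod (p ^ m)%:Z])%Z) /\
  (forall g, H g -> exists V : set G, [/\ open V, V g &
      forall h, H h -> V h -> (c h = c g %[mod (p ^ m)%:Z])%Z]).

(* The natural map H^1(H, Z_p(1)/p^m) -> H^1(H, Z_p(1)/p), induced by reduction
   mod p, is surjective: every continuous cocycle mod p is cohomologous (differs
   by a coboundary h |-> theta(h) a - a) to the reduction of a continuous
   cocycle mod p^m. *)
Definition H1_reduction_surj (p m : nat) (G : topologicalType) (mul : G -> G -> G)
  (theta : G -> nat -> int) (H : set G) : Prop :=
  forall c : G -> int, cont_cocycle p 1 mul theta H c ->
  exists c' : G -> int, cont_cocycle p m mul theta H c' /\
  exists a : int, forall h, H h ->
    (c' h = c h + (theta h 1%N * a - a) %[mod p%:Z])%Z.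

Definition cyclotomic (p : nat) (G : topologicalType) mul inv (one : G)
  (theta : G -> nat -> int) : Prop :=
  forall (H : set G) (m : nat), closed_subgroup mul inv one H -> (0 < m)%N ->
    H1_reduction_surj p m mul theta H.

From HB Require Import structures.
From mathcomp Require Import all_boot all_order all_algebra.
From mathcomp Require Import all_classical all_reals all_analysis.
From mathcomp Require Import Rstruct.
Import GRing.Theory.
Local Open Scope classical_set_scope.

(* As theta = 1 mod p, a continuous cocycle c mod p on H is a continuous
   homomorphism H -> Z/p. The open normal subgroups of a profinite group form
   a neighbourhood basis of 1, so c vanishes on H ∩ N for some open normal N,
   and c extends through H/(H ∩ N) = HN/N to a cocycle on the open subgroup
   HN. A lift of this extension, restricted to H, lifts c. *)

Section quasi_component.
Context {T : topologicalType}.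
Hypotheses (cT : compact [set: T]) (hT : hausdorff_space T).

Definition quasi_component (x : T) : set T :=
  \bigcap_(C in [set C | clopen C /\ C x]) C.

Lemma quasi_component_refl x : quasi_component x x.
Proof. by move=> C []. Qed.

Lemma quasi_component_closed x : closed (quasi_component x).
Proof. by apply: closed_bigI => C [[]]. Qed.

Lemma quasi_componentPn x y :
  ~ quasi_component x y <-> exists C, [/\ clopen C, C x & ~ C y].
Proof.
split=> [nQy|[C [cC Cx nCy]] Qy]; last exact: nCy (Qy C (conj cC Cx)).
apply: contrapT => hC; apply: nQy => C [cC Cx].
by apply: contrapT => nCy; apply: hC; exists C.
Qed.

Lemma quasi_component_sub_open x (O : set T) : open O ->
  quasi_component x `<=` O -> exists C, [/\ clopen C, C x & C `<=` O].
Proof.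
move=> oO QO; apply: contrapT => noC.
pose F := filter_from [set C | clopen C /\ C x] (fun C => C `\` O).
have FF : Filter F.
  apply: filter_from_filter; first by exists setT; split => //; exact: clopenT.
  move=> A B [cA Ax] [cB Bx]; exists (A `&` B); first by split; [exact: clopenI|].
  by move=> z [[Az Bz] nOz].
have PF : ProperFilter F.
  apply: filter_from_proper => C [cC Cx]; apply/set0P/negP => /eqP.
  by rewrite setD_eq0 => CO; apply: noC; exists C.
have [y [_]] : [set: T] `&` cluster F !=set0 by apply: cT; exact: filterT.
rewrite clusterE => Fy.
have inC C : clopen C -> C x -> C y /\ ~ O y.
  move=> [oC clC] Cx; have /closureI[] : closure (C `&` ~` O) y.
    by apply: Fy; exists C.
  by rewrite -(closure_id C).1 // -(closure_id (~` O)).1 //; exact: open_closedC.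
have [_ nOy] := inC _ clopenT I.
by apply/nOy/QO => C [cC Cx]; have [] := inC C cC Cx.
Qed.

Lemma quasi_component_sub_closed_part x (A B : set T) : closed A -> closed B ->
  A `&` B = set0 -> quasi_component x `<=` A `|` B -> A x ->
  quasi_component x `<=` A.
Proof.
move=> clA clB AB0 QAB Ax.
(* The real type is a mere parameter of [normal_openP]. *)
have [U [V [oU oV AU BV UV0]]] := (normal_openP (R := Rdefinitions.R)).1
  (compact_normal hT cT) A B clA clB AB0.
have [C [[oC clC] Cx CUV]] : exists C, [/\ clopen C, C x & C `<=` U `|` V].
  apply: quasi_component_sub_open; first exact: openU.
  exact: subset_trans QAB (setUSS AU BV).
have CU : C `&` U = C `&` ~` V.
  apply/seteqP; split=> z [Cz Uz]; split => //.
    by move=> Vz; have : (U `&` V) z by []; rewrite UV0.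
  by have [] := CUV z Cz.
have QU : quasi_component x `<=` U.
  move=> z /(_ (C `&` U)) [] //; split; last by split => //; exact: AU.
  by split; [exact: openI|rewrite CU; apply: closedI => //; exact: open_closedC].
move=> z Qz; have [//|Bz] := QAB z Qz.
have : (U `&` V) z by split; [exact: QU|exact: BV].
by rewrite UV0.
Qed.

Lemma quasi_component_connected x : connected (quasi_component x).
Proof.
apply/connectedP => E [E0 QE sepE].
have dE : E false `&` E true = set0 by exact: separated_disjoint.
have clE b : closed (E b).
  have clQ := quasi_component_closed x; rewrite QE in clQ.
  rewrite (closure_id (E b)); apply/seteqP; split; first exact: subset_closure.
  move=> z Ez; have /clQ : closure (E false `|` E true) z.
    by apply: closureS Ez; case: b => ? ?; [right|left].
  case: sepE b Ez => sF sT [] Ez [] // Ez'.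
  - by have : (E false `&` closure (E true)) z by []; rewrite sT.
  - by have : (closure (E false) `&` E true) z by []; rewrite sF.
have dEb b : E b `&` E (~~ b) = set0 by case: b; rewrite // setIC.
have [b Ebx] : exists b, E b x.
  have := quasi_component_refl x; rewrite QE.
  by case; [exists false|exists true].
have QEb : quasi_component x `<=` E b.
  apply: (quasi_component_sub_closed_part _ _ _ (clE b) (clE (~~ b)) (dEb b)
    _ Ebx).
  by rewrite QE; case: b {Ebx} => //; rewrite setUC.
have [z Ez] := E0 (~~ b).
have : (E b `&` E (~~ b)) z.
  by split => //; apply: QEb; rewrite QE; case: b {Ebx} Ez; [left|right].
by rewrite dEb.
Qed.

Lemma compact_totally_disconnected_zero_dimensional :
  totally_disconnected [set: T] -> zero_dimensional T.
Proof.
move=> tdT x y /eqP xy; apply/(quasi_componentPn x y) => Qy.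
have : connected_component [set: T] x y.
  exists (quasi_component x) => //.
  by split; [exact: quasi_component_refl| |exact: quasi_component_connected].
by rewrite tdT // => /esym.
Qed.

Lemma compact_clopen_nbhs x (O : set T) : totally_disconnected [set: T] ->
  nbhs x O -> exists C, [/\ clopen C, C x & C `<=` O].
Proof.
move=> tdT nO; have zT := compact_totally_disconnected_zero_dimensional tdT.
by have [C [Cx cC] CO] := zero_dimensional_cvg hT zT cT nO; exists C.
Qed.

End quasi_component.

Lemma clopen_near_iff {T U : topologicalType} {f : T -> U} {W : set U} {a : T} :
  clopen W -> {for a, continuous f} -> \forall b \near a, W (f b) <-> W (f a).
Proof.
move=> [oW clW] fa; have [Wfa|nWfa] := pselect (W (f a)).
  have fW : nbhs a (f @^-1` W) by apply: fa; exact: open_nbhs_nbhs.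
  by apply: filterS fW => b.
have fW : nbhs a (f @^-1` (~` W)).
  by apply: fa; apply: open_nbhs_nbhs; split => //; exact: closed_openC.
by apply: filterS fW => b.
Qed.

Section profinite_group.
Context {G : topologicalType} {mul : G -> G -> G} {inv : G -> G} {one : G}.
Hypothesis hG : is_profinite_group mul inv one.

Let gmulA x y z : mul x (mul y z) = mul (mul x y) z. Proof. by case: hG. Qed.
Let gmul1g x : mul one x = x. Proof. by case: hG => _ /(_ x)[]. Qed.
Let gmulg1 x : mul x one = x. Proof. by case: hG => _ /(_ x)[]. Qed.
Let gmulVg x : mul (inv x) x = one. Proof. by case: hG => _ _ /(_ x)[]. Qed.
Let gmulgV x : mul x (inv x) = one. Proof. by case: hG => _ _ /(_ x)[]. Qed.
Let gmul_cont : continuous (fun xy : G * G => mul xy.1 xy.2).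
Proof. by case: hG => _ _ _ []. Qed.

Let gmulKg x y : mul (inv x) (mul x y) = y.
Proof. by rewrite gmulA gmulVg gmul1g. Qed.
Let gmulKVg x y : mul x (mul (inv x) y) = y.
Proof. by rewrite gmulA gmulgV gmul1g. Qed.
Let ginvK x : inv (inv x) = x.
Proof. by rewrite -[RHS](gmulKg (inv x)) gmulVg gmulg1. Qed.
Let ginvM x y : inv (mul x y) = mul (inv y) (inv x).
Proof. by rewrite -[RHS](gmulKg (mul x y)) -gmulA gmulKVg gmulgV gmulg1. Qed.

Lemma cvg_gmul {T} (F : set_system T) {FF : Filter F} (f g : T -> G) a b :
  f @ F --> a -> g @ F --> b -> (fun t => mul (f t) (g t)) @ F --> mul a b.
Proof. exact: continuous2_cvg (gmul_cont (a, b)). Qed.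

Lemma continuous_gmull a : continuous (mul a).
Proof. by move=> v; apply: cvg_gmul; [exact: cvg_cst|exact: cvg_id]. Qed.

Lemma open_lcoset (N : set G) g : open N -> open [set v | N (mul (inv g) v)].
Proof. by move=> oN; apply: open_comp oN => v _; exact: continuous_gmull. Qed.

Lemma subgroup_open_nbhs1 (N : set G) :
  is_subgroup mul inv one N -> nbhs one N -> open N.
Proof.
move=> [_ NM _] nN; rewrite openE => x Nx.
have : nbhs x [set v | N (mul (inv x) v)].
  by apply: continuous_gmull; rewrite gmulVg.
by apply: filterS => v /(NM _ _ Nx); rewrite gmulKVg.
Qed.

Definition is_normal (N : set G) := forall g n, N n -> N (mul (inv g) (mul n g)).

(* [W] is locally constant near each [(y, one, z)]; compactness of [G * G]
   makes the neighbourhood of [one] uniform in [(y, z)]. *)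
Lemma clopen_translation_near_one (W : set G) : clopen W ->
  \forall x \near one, forall y z, W (mul y (mul x z)) <-> W (mul y z).
Proof.
move=> cW; have [_ _ _ _ [cT _ _]] := hG.
have cTT : compact [set: G * G] by rewrite -setXTT; exact: compact_setX.
pose P x (q : G * G) := W (mul q.1 (mul x q.2)) <-> W (mul q.1 q.2).
suff : \forall x \near one, [set: G * G] `<=` P x.
  by apply: filterS => x Px y z; exact: (Px (y, z)).
apply: ((compact_near_coveringP _).1 cTT G (nbhs one) P _) => q _.
have cf : {for (q, one),
    continuous (fun r : G * G * G => mul r.1.1 (mul r.2 r.1.2))}.
  apply: cvg_gmul; first exact: cvg_comp cvg_fst cvg_fst.
  by apply: cvg_gmul; [exact: cvg_snd|exact: cvg_comp cvg_fst cvg_snd].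
have cg : {for (q, one), continuous (fun r : G * G * G => mul r.1.1 r.1.2)}.
  by apply: cvg_gmul; apply: cvg_comp cvg_fst _; [exact: cvg_fst|exact: cvg_snd].
have := clopen_near_iff cW cf; have := clopen_near_iff cW cg.
rewrite /= gmul1g; apply: filterS2 => r gr fr.
exact: iff_trans fr (iff_sym gr).
Qed.

Lemma clopen_open_normal_subgroup (W : set G) : clopen W -> W one ->
  exists N, [/\ is_subgroup mul inv one N, open N, is_normal N & N `<=` W].
Proof.
move=> cW W1; pose N x := forall y z, W (mul y (mul x z)) <-> W (mul y z).
have sgN : is_subgroup mul inv one N.
  split; rewrite /N.
  - by move=> y z; rewrite gmul1g.
  - by move=> a b Na Nb y z; rewrite -gmulA; exact: iff_trans (Na _ _) (Nb _ _).
  - by move=> a Na y z; apply: iff_sym; rewrite -{1}(gmulKVg a z).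
exists N; split => //.
- exact: subgroup_open_nbhs1 _ sgN (clopen_translation_near_one _ cW).
- move=> g n Nn y z; rewrite -!gmulA gmulA; apply: iff_trans (Nn _ _) _.
  by rewrite -gmulA gmulKg.
- by move=> x /(_ one one); rewrite !gmul1g gmulg1 => -[_]; apply.
Qed.

Definition coset_union (H N : set G) : set G :=
  [set u | exists2 g, H g & N (mul (inv g) u)].

Lemma sub_coset_union {H N : set G} : N one -> H `<=` coset_union H N.
Proof. by move=> N1 g Hg; exists g; rewrite ?gmulVg. Qed.

Lemma open_coset_union {H N : set G} : open N -> open (coset_union H N).
Proof.
move=> oN; rewrite openE => u [g Hg Ngu].
have : nbhs u [set v | N (mul (inv g) v)].
  by apply: open_nbhs_nbhs; split => //; exact: open_lcoset.
by apply: filterS => v Nv; exists g.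
Qed.

Lemma normal_lcoset_mul {N : set G} {g1 g2 u1 u2 : G} :
  is_subgroup mul inv one N -> is_normal N ->
  N (mul (inv g1) u1) -> N (mul (inv g2) u2) ->
  N (mul (inv (mul g1 g2)) (mul u1 u2)).
Proof.
move=> [_ NM _] nN Nu1 Nu2; have := NM _ _ (nN g2 _ Nu1) Nu2.
by rewrite ginvM -!gmulA gmulKVg.
Qed.

Lemma coset_union_subgroup {H N : set G} :
  is_subgroup mul inv one H -> is_subgroup mul inv one N -> is_normal N ->
  is_subgroup mul inv one (coset_union H N).
Proof.
move=> [H1 HM HI] sgN nN; have [N1 _ NI] := sgN; split.
- exact: sub_coset_union.
- move=> u1 u2 [g1 Hg1 Nu1] [g2 Hg2 Nu2]; exists (mul g1 g2); first exact: HM.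
  exact: normal_lcoset_mul sgN nN Nu1 Nu2.
- move=> u [g Hg Nu]; exists (inv g); first exact: HI.
  have := nN (inv g) _ (NI _ Nu).
  by rewrite ginvK ginvM ginvK -gmulA gmulgV gmulg1.
Qed.

Lemma cont_cocycle_sub {p m theta} {H U : set G} {c} : H `<=` U ->
  cont_cocycle p m mul theta U c -> cont_cocycle p m mul theta H c.
Proof.
move=> HU [cc ct]; split=> [g h Hg Hh|g Hg]; first by apply: cc; exact: HU.
have [V [oV Vg cV]] := ct g (HU g Hg).
by exists V; split => // h Hh; apply: cV; exact: HU.
Qed.

Section cocycles_mod_p.
Context {p : nat} {theta : G -> nat -> int}.
Hypothesis theta1 : forall g, theta g 1 = 1%R.
Local Open Scope ring_scope.

Lemma cocycle1_additive {H : set G} {c g h} : cont_cocycle p 1 mul theta H c ->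
  H g -> H h -> (c (mul g h) = c g + c h %[mod p])%Z.
Proof. by case=> cc _ Hg Hh; rewrite -[p]expn1 cc // theta1 mul1r. Qed.

Lemma cocycle1_open_normal_kernel {H : set G} {c} :
  is_subgroup mul inv one H -> cont_cocycle p 1 mul theta H c ->
  exists N, [/\ is_subgroup mul inv one N, open N, is_normal N &
    forall h, H h -> N h -> (c h = 0 %[mod p])%Z].
Proof.
move=> [H1 _ _] cc; have [_ /(_ one H1)[V [oV V1 cV]]] := cc.
have c1 : (c one = 0 %[mod p])%Z.
  have := cocycle1_additive cc H1 H1; rewrite gmul1g => /eqP.
  by rewrite -[X in (X == _ %[mod _])%Z]addr0 eqz_modDl => /eqP.
have [_ _ _ _ [cT hT tdT]] := hG.
have [W [cW W1 WV]] :=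
  compact_clopen_nbhs cT hT _ _ tdT (open_nbhs_nbhs (conj oV V1)).
have [N [sgN oN nN NW]] := clopen_open_normal_subgroup _ cW W1.
exists N; split => // h Hh Nh; rewrite -c1 -[p]expn1; exact/cV/WV/NW.
Qed.

Section coset_extension.
Context {H N : set G} {c : G -> int}.
Hypotheses (sgH : is_subgroup mul inv one H) (sgN : is_subgroup mul inv one N).
Hypotheses (oN : open N) (nN : is_normal N) (cc : cont_cocycle p 1 mul theta H c).
Hypothesis kerN : forall h, H h -> N h -> (c h = 0 %[mod p])%Z.

Lemma cocycle1_lcoset g g' : H g -> H g' -> N (mul (inv g) g') ->
  (c g' = c g %[mod p])%Z.
Proof.
have [_ HM HI] := sgH; move=> Hg Hg' Ngg'.
have Hgg' : H (mul (inv g) g') by apply: HM => //; exact: HI.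
rewrite -(gmulKVg g g') (cocycle1_additive cc) //.
by rewrite -modzDmr kerN // modzDmr addr0.
Qed.

Definition coset_extension (u : G) : int :=
  c (xget one [set g | H g /\ N (mul (inv g) u)]).

Lemma coset_extensionE {u g} : H g -> N (mul (inv g) u) ->
  (coset_extension u = c g %[mod p])%Z.
Proof.
move=> Hg Ngu; rewrite /coset_extension; set P := [set g | _].
have [Hg' Ng'u] : P (xget one P) by exact: xgetI (conj Hg Ngu).
apply: cocycle1_lcoset => //; have [_ NM NI] := sgN.
by have := NM _ _ Ngu (NI _ Ng'u); rewrite ginvM ginvK -gmulA gmulKVg.
Qed.

Lemma coset_extension_id h : H h -> (coset_extension h = c h %[mod p])%Z.
Proof. by move=> Hh; apply: coset_extensionE; rewrite ?gmulVg; case: sgN. Qed.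

Lemma coset_extension_cocycle :
  cont_cocycle p 1 mul theta (coset_union H N) coset_extension.
Proof.
split.
- move=> u1 u2 [g1 Hg1 Nu1] [g2 Hg2 Nu2]; have [_ HM _] := sgH.
  have Nu12 := normal_lcoset_mul sgN nN Nu1 Nu2.
  rewrite expn1 theta1 mul1r (coset_extensionE (HM _ _ Hg1 Hg2) Nu12).
  rewrite -modzDm (coset_extensionE Hg1 Nu1) (coset_extensionE Hg2 Nu2) modzDm.
  exact: cocycle1_additive cc Hg1 Hg2.
- move=> u [g Hg Ngu]; exists [set v | N (mul (inv g) v)]; split => //.
    exact: open_lcoset.
  move=> v _ Ngv.
  by rewrite expn1 (coset_extensionE Hg Ngv) (coset_extensionE Hg Ngu).
Qed.

Lemma coset_extension_lift m :
  H1_reduction_surj p m mul theta (coset_union H N) ->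
  exists c', cont_cocycle p m mul theta H c' /\
    exists a, forall h, H h -> (c' h = c h + (theta h 1%N * a - a) %[mod p])%Z.
Proof.
have [N1 _ _] := sgN; have HU : H `<=` coset_union H N := sub_coset_union N1.
move=> /(_ _ coset_extension_cocycle) [c' [cc' [a ha]]].
exists c'; split; first exact: cont_cocycle_sub HU cc'.
exists a => h Hh.
by rewrite (ha h (HU h Hh)) -modzDml (coset_extension_id h Hh) modzDml.
Qed.
End coset_extension.
End cocycles_mod_p.
End profinite_group.

Arguments is_normal {G} mul inv N.
Arguments coset_union {G} mul inv H N.
Arguments coset_extension {G} mul inv one H N c u.

Theorem mainTheorem10 (p : nat) (G : topologicalType)
  (mul : G -> G -> G) (inv : G -> G) (one : G) (theta : G -> nat -> int) :
  prime p ->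
  is_profinite_group mul inv one ->
  is_orientation p mul theta ->
  (forall (U : set G) (n : nat), open_subgroup mul inv one U -> (0 < n)%N ->
     H1_reduction_surj p n mul theta U) ->
  cyclotomic p mul inv one theta.
Proof.
move=> _ hG [_ _ theta1 _] surjU H m [sgH _] m0 c cc.
have [N [sgN oN nN kerN]] := cocycle1_open_normal_kernel hG theta1 sgH cc.
apply: (coset_extension_lift hG theta1 sgH sgN oN nN cc kerN).
apply: surjU m0; split.
- exact: (coset_union_subgroup hG sgH sgN nN).
- exact: (open_coset_union hG oN).
Qed.
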